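(* Let $n\geq 4$ and let $\gamma: WT_n\to\mathrm{GL}_{n+1}(\mathbb{C})$ be a homogeneous $3$-local representation of the welded twin group $WT_n$. Then $\gamma$ is reducible.
   Context: The virtual twin group $VT_n$ ($n\geq 2$) has generators $s_1,\dots,s_{n-1},\rho_1,\dots,\rho_{n-1}$ and defining relations: $s_i^2=1$ ($1\le i\le n-1$); $s_is_j=s_js_i$ ($|i-j|\ge2$); $\rho_i\rho_{i+1}\rho_i=\rho_{i+1}\rho_i\rho_{i+1}$ ($1\le i\le n-2$); $\rho_i\rho_j=\rho_j\rho_i$ ($|i-j|\ge2$); $\rho_i^2=1$; $s_i\rho_j=\rho_js_i$ ($|i-j|\ge2$); $\rho_i\rho_{i+1}s_i=s_{i+1}\rho_i\rho_{i+1}$ ($1\le i\le n-2$). The welded twin group $WT_n$ is the quotient of $VT_n$ by the additional relations $\rho_is_{i+1}s_i=s_{i+1}s_i\rho_{i+1}$ ($1\le i\le n-2$). A representation $\gamma:WT_n\to\mathrm{GL}_{n+1}(\mathbb{C})$ is homogeneous $3$-local if there are fixed $M,N\in\mathrm{GL}_3(\mathbb{C})$ with $\gamma(s_i)=\mathrm{diag}(I_{i-1},M,I_{n-i-1})$ and $\gamma(\rho_i)=\mathrm{diag}(I_{i-1},N,I_{n-i-1})$ for all $i$ (block-diagonal, $I_r$ the $r\times r$ identity). Reducible means there is a subspace $0\neq U\neq\mathbb{C}^{n+1}$ invariant under all $\gamma(g)$. *)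

From HB Require Import structures.
From mathcomp Require Import all_boot all_order all_algebra.
From mathcomp Require Import complex Rstruct.
From Stdlib Require Rdefinitions.
Set Implicit Arguments. Unset Strict Implicit. Unset Printing Implicit Defensive.
Import Order.TTheory GRing.Theory Num.Theory.
Local Open Scope ring_scope.

Definition CC : numClosedFieldType := Rdefinitions.R[i].

(* [local_mx n i M] = diag(I_{i-1}, M, I_{n-i-1}) in GL_{n+1}, for 1 <= i <= n-1:
   the 3x3 block M sits in rows/columns i-1, i, i+1 (0-based indices). *)
Definition local_mx (n i : nat) (M : 'M[CC]_3) : 'M[CC]_(n.+1) :=
  \matrix_(r < n.+1, c < n.+1)
    if [&& (i.-1 <= r)%N, (r < i.+2)%N, (i.-1 <= c)%N & (c < i.+2)%N]
    then M (inord (r - i.-1)) (inord (c - i.-1))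
    else (r == c)%:R.

(* The defining relations of WT_n hold for the images
   s_i |-> local_mx n i M, rho_i |-> local_mx n i N  (indices 1 <= i <= n-1). *)
Definition WT_relations (n : nat) (M N : 'M[CC]_3) : Prop :=
  let S i := local_mx n i M in
  let P i := local_mx n i N in
  (forall i, (1 <= i <= n.-1)%N -> S i *m S i = 1%:M) /\
  (forall i j, (1 <= i <= n.-1)%N -> (1 <= j <= n.-1)%N -> (i.+2 <= j)%N \/ (j.+2 <= i)%N ->
     S i *m S j = S j *m S i) /\
  (forall i, (1 <= i <= n.-2)%N -> P i *m P i.+1 *m P i = P i.+1 *m P i *m P i.+1) /\
  (forall i j, (1 <= i <= n.-1)%N -> (1 <= j <= n.-1)%N -> (i.+2 <= j)%N \/ (j.+2 <= i)%N ->
     P i *m P j = P j *m P i) /\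
  (forall i, (1 <= i <= n.-1)%N -> P i *m P i = 1%:M) /\
  (forall i j, (1 <= i <= n.-1)%N -> (1 <= j <= n.-1)%N -> (i.+2 <= j)%N \/ (j.+2 <= i)%N ->
     S i *m P j = P j *m S i) /\
  (forall i, (1 <= i <= n.-2)%N -> P i *m P i.+1 *m S i = S i.+1 *m P i *m P i.+1) /\
  (forall i, (1 <= i <= n.-2)%N -> P i *m S i.+1 *m S i = S i.+1 *m S i *m P i.+1).

Definition homogeneous_3_local_WT (n : nat) (M N : 'M[CC]_3) : Prop :=
  M \in unitmx /\ N \in unitmx /\ WT_relations n M N.

(* A subspace W of C^{n+1} (column vectors) is encoded by a matrix U whose rows
   are the transposes of vectors spanning W.  W is invariant under A
   (i.e. x in W -> A x in W) iff (U *m A^T <= U)%MS, since (A x)^T = x^T A^T. *)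
Definition invariant_subspace (m : nat) (A : 'M[CC]_m) (U : 'M[CC]_m) : bool :=
  (U *m A^T <= U)%MS.

(* The representation is reducible: some subspace 0 <> W <> C^{n+1} is invariant
   under every gamma(g); since WT_n is generated by the s_i, rho_i (and an
   invariant subspace of an invertible matrix in finite dimension is invariant
   under its inverse), it suffices to ask invariance under the generators. *)
Definition reducible_local (n : nat) (M N : 'M[CC]_3) : Prop :=
  exists U : 'M[CC]_(n.+1),
    (0 < \rank U < n.+1)%N /\
    forall i, (1 <= i <= n.-1)%N ->
      invariant_subspace (local_mx n i M) U /\ invariant_subspace (local_mx n i N) U.

From mathcomp Require Import all_boot all_order all_algebra zify.
Set Implicit Arguments. Unset Strict Implicit. Unset Printing Implicit Defensive.
Import Order.TTheory GRing.Theory Num.Theory.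
Local Open Scope ring_scope.

(* With 0-based coordinates, the blocks of gamma(s_1), gamma(rho_1)
   occupy coordinates 0..2 and those of gamma(s_3), gamma(rho_3) occupy 2..4,
   overlapping in coordinate 2 only.  Comparing the entries of both products
   in rows 0, 1 and columns 3, 4 shows that X r 2 * Y 0 c = 0 for all
   X, Y in {M, N}, r <> 2 and c <> 0.  Hence either the last columns of M and
   N are multiples of e_2, and then e_n spans a line invariant under every
   generator (only the block at position n-1 meets the last coordinate), or
   the first rows of M and N are multiples of e_0^T, and then the hyperplane
   x_0 = 0 is invariant. *)

Section LocalEntries.

Variables (n i : nat) (X : 'M[CC]_3).

Lemma local_mx_out (r c : 'I_n.+1) :
  ~~ [&& i.-1 <= r, r < i.+2, i.-1 <= c & c < i.+2]%N ->
  local_mx n i X r c = (r == c)%:R.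
Proof. by rewrite mxE => /negbTE ->. Qed.

Lemma local_mx_block (r c : 'I_n.+1) (a b : 'I_3) : (0 < i)%N ->
  r = i.-1 + a :> nat -> c = i.-1 + b :> nat -> local_mx n i X r c = X a b.
Proof.
move=> i0 ra cb; have a3 := ltn_ord a; have b3 := ltn_ord b.
rewrite mxE ifT; last by apply/and4P; split; lia.
by rewrite ra cb !addKn !inord_val.
Qed.

Lemma local_mx_first_row (c : 'I_n.+1) : (0 < i)%N ->
  (forall b : 'I_3, b != ord0 -> X ord0 b = 0) ->
  c != ord0 -> local_mx n i X ord0 c = 0.
Proof.
move=> i0 X0 c0; have c0' : c != 0%N :> nat := c0.
have [/andP[/eqP i1 c3]|out] := boolP ((i == 1) && (c < 3))%N; last first.
  rewrite local_mx_out; last by rewrite /=; lia.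
  by move: c0; rewrite eq_sym => /negbTE ->.
rewrite (local_mx_block (a := ord0) (b := Ordinal c3)) ?i1 //.
by apply: X0; rewrite -val_eqE.
Qed.

Lemma local_mx_last_col (r : 'I_n.+1) : (1 <= i <= n.-1)%N ->
  (forall a : 'I_3, a != ord_max -> X a ord_max = 0) ->
  r != ord_max -> local_mx n i X r ord_max = 0.
Proof.
move=> i0 X2 rn; have rn' : r != n :> nat := rn.
have [/andP[/eqP iN ir]|out] := boolP ((i == n.-1) && (i.-1 <= r))%N; last first.
  by rewrite local_mx_out ?(negbTE rn) //=; lia.
have r3 : (r - i.-1 < 3)%N by have := ltn_ord r; lia.
rewrite (local_mx_block (a := Ordinal r3) (b := ord_max)) /=; try lia.
by apply: X2; rewrite -val_eqE /=; lia.
Qed.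

End LocalEntries.

Lemma invariant_coord_line m (A : 'M[CC]_m) (j : 'I_m) :
  (forall k, k != j -> A k j = 0) -> invariant_subspace A (delta_mx j j).
Proof.
move=> Aj; have rowj : row j A^T = A j j *: delta_mx 0 j.
  apply/rowP => k; rewrite !mxE eqxx /=.
  by have [->|kj] := eqVneq k j; rewrite ?mulr1 // mulr0 Aj.
have -> : delta_mx j j = delta_mx j (0 : 'I_1) *m delta_mx 0 j :> 'M[CC]_m.
  by rewrite mul_delta_mx.
rewrite /invariant_subspace -mulmxA -rowE rowj.
by rewrite -scalemxAr mul_delta_mx scalemx_sub.
Qed.

Lemma invariant_coord_hyperplane m (A : 'M[CC]_m) (j : 'I_m) :
  (forall k, k != j -> A j k = 0) ->
  invariant_subspace A (kermx (delta_mx j 0 : 'M_(m, 1))).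
Proof.
move=> Aj; have colj : col j A^T = A j j *: delta_mx j 0.
  apply/colP => k; rewrite !mxE eqxx andbT.
  by have [->|kj] := eqVneq k j; rewrite ?mulr1 // mulr0 Aj.
rewrite /invariant_subspace sub_kermx -mulmxA -colE colj.
by rewrite -scalemxAr mulmx_ker scaler0.
Qed.

Lemma mxrank_coord_hyperplane m (j : 'I_m) :
  \rank (kermx (delta_mx j 0 : 'M[CC]_(m, 1))) = m.-1.
Proof. by rewrite mxrank_ker mxrank_delta subn1. Qed.

Lemma local_mx_comm_overlap n i (X Y : 'M[CC]_3) (r c : 'I_3) :
  (0 < i)%N -> (i.+3 <= n)%N -> r != ord_max -> c != ord0 ->
  local_mx n i X *m local_mx n i.+2 Y = local_mx n i.+2 Y *m local_mx n i X ->
  X r ord_max * Y ord0 c = 0.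
Proof.
rewrite -!val_eqE /= => i0 i3n r2 c0 comm.
have r3 := ltn_ord r; have c3 := ltn_ord c.
pose R : 'I_n.+1 := inord (i.-1 + r); pose C : 'I_n.+1 := inord (i.+1 + c).
have vR : R = i.-1 + r :> nat by rewrite inordK; lia.
have vC : C = i.+1 + c :> nat by rewrite inordK; lia.
have lhs : (local_mx n i X *m local_mx n i.+2 Y) R C = X r ord_max * Y ord0 c.
  (* k = i+1 is the only index at which neither factor is an identity entry *)
  rewrite mxE (bigD1 (inord i.+1)) // big1 /= => [|k].
  - have vI : (inord i.+1 : 'I_n.+1) = i.+1 :> nat by rewrite inordK; lia.
    rewrite addr0 (local_mx_block X (a := r) (b := ord_max))
                  ?(local_mx_block Y (a := ord0) (b := c)) //=; lia.
  rewrite -val_eqE /= inordK; last by lia.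
  move=> ki; have [kin|kout] := boolP ((i.-1 <= k) && (k <= i))%N.
    rewrite (local_mx_out Y); last by lia.
    have -> : (k == C) = false by apply/negbTE; rewrite -val_eqE /= vC; lia.
    by rewrite mulr0.
  rewrite (local_mx_out X); last by lia.
  have -> : (R == k) = false by apply/negbTE; rewrite -val_eqE /= vR; lia.
  by rewrite mul0r.
have rhs : (local_mx n i.+2 Y *m local_mx n i X) R C = 0.
  rewrite mxE (bigD1 R) // big1 /= => [|k kR].
  - rewrite addr0 (local_mx_out X); last by lia.
    have -> : (R == C) = false by apply/negbTE; rewrite -val_eqE /= vR vC; lia.
    by rewrite mulr0.
  rewrite (local_mx_out Y); last by lia.
  by rewrite eq_sym (negbTE kR) mul0r.
by rewrite -lhs comm rhs.
Qed.

Theorem theorem4p4 (n : nat) (M N : 'M[CC]_3) :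
  (4 <= n)%N -> homogeneous_3_local_WT n M N -> reducible_local n M N.
Proof.
rewrite /homogeneous_3_local_WT /WT_relations /=.
move=> n4 [_ [_ [_ [commS [_ [commP [_ [commSP _]]]]]]]].
have comm13 X Y : X \in [:: M; N] -> Y \in [:: M; N] ->
    local_mx n 1 X *m local_mx n 3 Y = local_mx n 3 Y *m local_mx n 1 X.
  rewrite !inE => /orP[]/eqP-> /orP[]/eqP->;
    [apply: commS | apply: commSP | symmetry; apply: commSP | apply: commP]; lia.
have MN : M \in [:: M; N] /\ N \in [:: M; N] by rewrite !inE !eqxx orbT.
case: (boolP [exists a : 'I_3,
                (a != ord_max) && ((M a ord_max != 0) || (N a ord_max != 0))]).
- case/existsP=> a /andP[a2 nz].
  have [X XMN Xa] : exists2 X, X \in [:: M; N] & X a ord_max != 0.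
    by case/orP: nz; [exists M | exists N]; case: MN.
  have row0 Y : Y \in [:: M; N] -> forall b : 'I_3, b != ord0 -> Y ord0 b = 0.
    move=> YMN b b0; apply/eqP.
    have /eqP := local_mx_comm_overlap (i := 1) isT n4 a2 b0 (comm13 X Y XMN YMN).
    by rewrite mulf_eq0 (negbTE Xa).
  exists (kermx (delta_mx ord0 0 : 'M_(n.+1, 1))).
  split; first by rewrite mxrank_coord_hyperplane; lia.
  move=> i /andP[i1 _].
  by split; apply: invariant_coord_hyperplane => c;
    apply: local_mx_first_row => //; apply: row0; case: MN.
- rewrite negb_exists => /forallP col2.
  have colM a : a != ord_max -> M a ord_max = 0.
    by move=> a2; move: (col2 a); rewrite a2 /= negb_or !negbK => /andP[/eqP].
  have colN a : a != ord_max -> N a ord_max = 0.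
    by move=> a2; move: (col2 a); rewrite a2 /= negb_or !negbK => /andP[_ /eqP].
  exists (delta_mx ord_max ord_max); split; first by rewrite mxrank_delta; lia.
  move=> i i1n.
  by split; apply: invariant_coord_line => r; apply: local_mx_last_col.
Qed.
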